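(* Let $a=(a_1,\dots,a_m)$ be a composition with $a_m=2$, and let $a'=(a_1,\dots,a_{m-1},1,1)$. Then for every $n\ge 0$, the number of compositions of size $n$ that dominate $a$ equals the number of compositions of size $n$ that dominate $a'$.
   Context: A composition is a finite sequence of positive integers; its size is the sum of its components. A composition $b=(b_1,\dots,b_k)$ dominates $a=(a_1,\dots,a_m)$ if there are indices $1\le i(1)<i(2)<\dots<i(m)\le k$ with $a_j\le b_{i(j)}$ for every $j\in[m]$. *)

From mathcomp Require Import all_boot.
Set Implicit Arguments. Unset Strict Implicit. Unset Printing Implicit Defensive.

(* A composition: finite sequence of positive integers; its size is sumn. *)
Definition is_composition (s : seq nat) : bool := all (fun x => 0 < x) s.

(* b dominates a: there are indices i(1) < ... < i(m) in b with a_j <= b_{i(j)}.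
   Indices are 0-based here: a strictly increasing map f : 'I_(size a) -> 'I_(size b). *)
Definition dominates (b a : seq nat) : bool :=
  [exists f : {ffun 'I_(size a) -> 'I_(size b)},
    [forall j1 : 'I_(size a), forall j2 : 'I_(size a), (j1 < j2) ==> (f j1 < f j2)] &&
    [forall j : 'I_(size a), nth 0 a j <= nth 0 b (f j)]].

(* words_len L n : all sequences of length L with entries in {1,...,n}
   (a finite duplicate-free candidate list, used only to count). *)
Fixpoint words_len (L n : nat) : seq (seq nat) :=
  match L with
  | 0 => [:: [::]]
  | L'.+1 => [seq x :: w | x <- iota 1 n, w <- words_len L' n]
  end.

(* All sequences of length <= n with entries in {1..n}; every composition of
   size n is among them, exactly once. *)
Definition cands (n : nat) : seq (seq nat) :=
  flatten [seq words_len L n | L <- iota 0 n.+1].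

Definition num_dominating (n : nat) (a : seq nat) : nat :=
  count (fun b => [&& is_composition b, sumn b == n &
                      dominates b a]) (cands n).

From mathcomp Require Import all_boot zify.

Set Implicit Arguments.
Unset Strict Implicit.
Unset Printing Implicit Defensive.

(* 1. Domination is decided by the greedy algorithm: scan b from the left and
      match the next entry of a with the first entry of b that is large enough.
      We show that [dominates] (an existentially quantified strictly increasing
      index map) coincides with this greedy test [greedy_dom].
   2. If the greedy embedding of the prefix a0 into b consumes the first k
      entries of b, then b dominates a0 ++ t iff [drop k b] dominates t, and
      the first k entries keep being consumed whatever follows them.
   3. On the tail v = drop k b, dominating [:: 2] means having an entry >= 2,
      and dominating [:: 1; 1] means having at least two entries.  The size-
      and positivity-preserving involution [swap_tail] exchanging [:: m] with
      m ones turns the first property into the second.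
   4. Applying [swap_tail] to the tail left by the greedy embedding of a0
      gives an involution on compositions of size n carrying the first
      counted set onto the second; an involution preserves counts. *)

Fixpoint greedy_dom (b a : seq nat) {struct b} : bool :=
  match a with
  | [::] => true
  | x :: a' => match b with
               | [::] => false
               | y :: b' => greedy_dom b' (if x <= y then a' else a)
               end
  end.

Lemma greedy_dom_nil b : greedy_dom b [::] = true. Proof. by case: b. Qed.

(* Domination witnessed by an arbitrary index function on nat, strictly
   increasing on the indices of a; easier to manipulate than the finite
   function of [dominates]. *)
Definition embedding (b a : seq nat) : Prop :=
  exists h : nat -> nat,
    (forall j1 j2, j1 < j2 -> j2 < size a -> h j1 < h j2) /\
    (forall j, j < size a -> h j < size b /\ nth 0 a j <= nth 0 b (h j)).

Lemma dominatesP b a : reflect (embedding b a) (dominates b a).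
Proof.
apply: (iffP existsP).
- move=> [f /andP[/forallP Hinc /forallP Hle]].
  pose h j := if (insub j : option 'I_(size a)) is Some o then val (f o) else 0.
  have hE (o : 'I_(size a)) : h o = f o by rewrite /h valK.
  exists h; split.
  + move=> j1 j2 H12 H2.
    have H1 : j1 < size a by exact: ltn_trans H12 H2.
    have := forallP (Hinc (Ordinal H1)) (Ordinal H2).
    by rewrite /= H12 (hE (Ordinal H1)) (hE (Ordinal H2)).
  + move=> j Hj; rewrite (hE (Ordinal Hj)); split; first exact: ltn_ord.
    exact: (Hle (Ordinal Hj)).
- move=> [h [Hinc Hb]].
  exists [ffun o : 'I_(size a) => Ordinal (proj1 (Hb o (ltn_ord o)))].
  apply/andP; split.
  + apply/forallP => j1; apply/forallP => j2; apply/implyP => H12.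
    rewrite !ffunE /=; exact: Hinc.
  + apply/forallP => j; rewrite ffunE /=; exact: (proj2 (Hb j (ltn_ord j))).
Qed.

Lemma embedding_nil b : embedding b [::].
Proof. by exists id; split => // j1 j2 _; rewrite ltn0. Qed.

Lemma embedding_nil_l x a : ~ embedding [::] (x :: a).
Proof. by move=> [h [_ Hb]]; have [] := Hb 0 (ltn0Sn _). Qed.

Lemma embedding_skip y b a : embedding b a -> embedding (y :: b) a.
Proof.
move=> [h [Hinc Hb]]; exists (fun j => (h j).+1); split => [j1 j2 *|j Hj].
- exact: Hinc.
- by have [] := Hb j Hj.
Qed.

Lemma embedding_match x y b a :
  x <= y -> embedding b a -> embedding (y :: b) (x :: a).
Proof.
move=> Hxy [h [Hinc Hb]].
exists (fun j => if j is j'.+1 then (h j').+1 else 0); split.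
- by move=> [|j1] [|j2] //= H12 H2; apply: Hinc.
- by move=> [|j] Hj //=; have [] := Hb j Hj.
Qed.

(* Removing the first entries of both sequences keeps an embedding: the
   first entry of a was matched at index 0 or later, the others further. *)
Lemma embedding_behead x y b a : embedding (y :: b) (x :: a) -> embedding b a.
Proof.
move=> [h [Hinc Hb]]; exists (fun j => (h j.+1).-1); split.
- move=> j1 j2 H12 H2.
  have := Hinc j1.+1 j2.+1 H12 H2.
  have := Hinc 0 j1.+1 isT (ltn_trans H12 H2).
  lia.
- move=> j Hj; have [Hb1 Hn1] := Hb j.+1 Hj.
  have := Hinc 0 j.+1 isT Hj.
  by move: Hb1 Hn1; case: (h j.+1).
Qed.

(* If y < x, the entry y cannot be matched with x, hence (by monotonicity of
   the index map) it is not used at all. *)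
Lemma embedding_unused x y b a :
  y < x -> embedding (y :: b) (x :: a) -> embedding b (x :: a).
Proof.
move=> Hyx [h [Hinc Hb]].
have h_pos j : j < (size a).+1 -> 0 < h j.
  have h0_pos : 0 < h 0.
    have [_] := Hb 0 (ltn0Sn _); case: (h 0) => //= Hx.
    by have := leq_ltn_trans Hx Hyx; rewrite ltnn.
  by case: j => [|j] // Hj; apply: ltn_trans h0_pos (Hinc 0 j.+1 isT Hj).
exists (fun j => (h j).-1); split.
- move=> j1 j2 H12 H2.
  have := Hinc j1 j2 H12 H2; have := h_pos j1 (ltn_trans H12 H2); lia.
- move=> j Hj; have [Hb1 Hn1] := Hb j Hj.
  by move: Hb1 Hn1 (h_pos j Hj); case: (h j).
Qed.

(* Correctness of the greedy algorithm: the two lemmas above show that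
   matching x with the first entry y of b whenever x <= y loses nothing. *)
Lemma greedy_domP b a : reflect (embedding b a) (greedy_dom b a).
Proof.
apply: (iffP idP).
- elim: b a => [|y b IH] [|x a] //= Hd; try exact: embedding_nil.
  case: (leqP x y) Hd => Hxy /IH Hd.
  + exact: embedding_match.
  + exact: embedding_skip.
- elim: b a => [|y b IH] [|x a] //= He; try by rewrite greedy_dom_nil.
  + by case: (embedding_nil_l He).
  + case: (leqP x y) => Hxy; apply: IH.
    * exact: embedding_behead He.
    * exact: embedding_unused He.
Qed.

Lemma dominates_greedy b a : dominates b a = greedy_dom b a.
Proof. exact/dominatesP/greedy_domP. Qed.

Fixpoint greedy_len (b a : seq nat) {struct b} : option nat :=
  match a with
  | [::] => Some 0
  | x :: a' => match b with
               | [::] => None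
               | y :: b' => omap S (greedy_len b' (if x <= y then a' else a))
               end
  end.

Lemma greedy_len_nil b : greedy_len b [::] = Some 0. Proof. by case: b. Qed.

Lemma greedy_dom_cat b a t :
  greedy_dom b (a ++ t) =
  if greedy_len b a is Some k then greedy_dom (drop k b) t else false.
Proof.
elim: b a => [|y b IH] [|x a] //=.
by case: (x <= y); rewrite ?IH -?cat_cons ?IH; case: greedy_len.
Qed.

Lemma greedy_len_take b a k v :
  greedy_len b a = Some k -> greedy_len (take k b ++ v) a = Some k.
Proof.
elim: b a k => [|y b IH] [|x a] k //=.
1,2: by case=> <-; rewrite greedy_len_nil.
by case E: greedy_len => [k'|] //= [<-] /=; rewrite (IH _ _ E).
Qed.

Lemma greedy_len_size b a k : greedy_len b a = Some k -> k <= size b.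
Proof.
elim: b a k => [|y b IH] [|x a] k //=.
1,2: by case=> <-.
by case E: greedy_len => [k'|] //= [<-]; apply: (IH _ _ E).
Qed.

Lemma greedy_dom_two v : greedy_dom v [:: 2] = has (leq 2) v.
Proof.
elim: v => [|y v IH] //=.
by case: (leqP 2 y) => //= _; rewrite greedy_dom_nil.
Qed.

Lemma greedy_dom_one_one v :
  is_composition v -> greedy_dom v [:: 1; 1] = (1 < size v).
Proof.
case: v => [|y [|z w]] //= /andP[Hy]; first by rewrite Hy.
by case/andP=> Hz _; rewrite Hy Hz greedy_dom_nil.
Qed.

Definition swap_tail (v : seq nat) : seq nat :=
  if v is [:: m] then nseq m 1
  else if all (pred1 1) v && (v != [::]) then [:: size v] else v.

Lemma has_ge2_composition v :
  is_composition v -> has (leq 2) v = ~~ all (pred1 1) v.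
Proof.
elim: v => [|y v IH] //= /andP[Hy Hv].
by rewrite negb_and IH //; congr (_ || _); lia.
Qed.

Variant swap_tail_spec (v : seq nat) : seq nat -> Prop :=
  | SwapSingle m of v = [:: m] : swap_tail_spec v (nseq m 1)
  | SwapOnes of v = nseq (size v) 1 & 1 < size v : swap_tail_spec v [:: size v]
  | SwapFixed of size v != 1 & ~~ all (pred1 1) v || (v == [::]) :
      swap_tail_spec v v.

Lemma swap_tailP v : swap_tail_spec v (swap_tail v).
Proof.
case: v => [|m [|y w]]; [exact: SwapFixed | exact: SwapSingle |].
set v := [:: m, y & w].
have -> : swap_tail v = if all (pred1 1) v && (v != [::]) then [:: size v] else v.
  by [].
case: ifP => [/andP[/all_pred1P Ev _] | Hn]; first exact: SwapOnes.
by apply: SwapFixed; move: Hn; case: (all _ _).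
Qed.

Lemma swap_tail_id v :
  size v != 1 -> ~~ all (pred1 1) v || (v == [::]) -> swap_tail v = v.
Proof.
case: v => [|y [|z w]] // _; rewrite orbF => /negbTE Hn.
by rewrite /swap_tail Hn.
Qed.

(* [swap_tail] preserves positivity of entries, the size, and is an
   involution on compositions (but not on [:: 0], sent to [::]). *)
Lemma swap_tail_composition v :
  is_composition v -> is_composition (swap_tail v).
Proof.
case: swap_tailP => [m -> | _ Hs | //] Hv; last by rewrite /is_composition /= ltnW.
by rewrite /is_composition all_nseq orbT.
Qed.

Lemma swap_tail_sumn v : sumn (swap_tail v) = sumn v.
Proof.
case: swap_tailP => // [m -> | Ev _]; first by rewrite sumn_nseq /= addn0 mul1n.
by rewrite {2}Ev sumn_nseq /= addn0 mul1n.
Qed.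

Lemma swap_tail_involutive v :
  is_composition v -> swap_tail (swap_tail v) = v.
Proof.
case: (swap_tailP v) => [m -> | Ev _ _ | Hs Hn _]; last exact: swap_tail_id.
- by case: m => [|[|m]] //= _; rewrite /swap_tail /= all_nseq /= orbT size_nseq.
- by rewrite /swap_tail -Ev.
Qed.

Lemma swap_tail_has_ge2 v :
  is_composition v -> has (leq 2) v = (1 < size (swap_tail v)).
Proof.
move=> Hv; rewrite has_ge2_composition //.
case: (swap_tailP v) Hv => [m -> | Ev Hs _ | Hs Hn _] /=.
- by rewrite size_nseq /is_composition /=; case: m => [|[|m]].
- by rewrite {1}Ev all_nseq orbT.
- by case: v Hs Hn => [|y [|z w]] //= _; rewrite orbF => ->.
Qed.

Lemma is_composition_cat s t :
  is_composition (s ++ t) = is_composition s && is_composition t.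
Proof. exact: all_cat. Qed.

Definition flip (a0 b : seq nat) : seq nat :=
  if greedy_len b a0 is Some k then take k b ++ swap_tail (drop k b) else b.

Section Flip.
Variables (a0 b : seq nat).
Hypothesis b_composition : is_composition b.

Lemma composition_take_drop k :
  is_composition (take k b) /\ is_composition (drop k b).
Proof.
by apply/andP; rewrite -is_composition_cat cat_take_drop.
Qed.

Lemma flip_composition : is_composition (flip a0 b) /\ sumn (flip a0 b) = sumn b.
Proof.
rewrite /flip; case: greedy_len => [k|] //.
have [Hpre Htail] := composition_take_drop k.
rewrite is_composition_cat Hpre swap_tail_composition // sumn_cat swap_tail_sumn.
by rewrite -sumn_cat cat_take_drop.
Qed.

Lemma flip_involutive : flip a0 (flip a0 b) = b.
Proof.
rewrite {2}/flip; case Eg: (greedy_len b a0) => [k|]; rewrite /flip ?Eg //.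
have Hk : size (take k b) = k by rewrite size_takel // (greedy_len_size Eg).
have [_ Htail] := composition_take_drop k.
by rewrite (greedy_len_take _ Eg) take_size_cat // drop_size_cat //
  swap_tail_involutive // cat_take_drop.
Qed.

Lemma flip_dominates :
  greedy_dom b (rcons a0 2) = greedy_dom (flip a0 b) (a0 ++ [:: 1; 1]).
Proof.
rewrite /flip -cats1 !greedy_dom_cat; case Eg: greedy_len => [k|]; last by rewrite Eg.
have Hk : size (take k b) = k by rewrite size_takel // (greedy_len_size Eg).
have [_ Htail] := composition_take_drop k.
rewrite (greedy_len_take _ Eg) drop_size_cat // greedy_dom_two.
by rewrite greedy_dom_one_one ?swap_tail_composition // swap_tail_has_ge2.
Qed.

End Flip.

Lemma count_involution (T : eqType) (phi : T -> T) (s : seq T) (C P Q : pred T) :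
  uniq s -> (forall x, C x -> x \in s) ->
  (forall x, C x -> [/\ C (phi x), phi (phi x) = x & P x = Q (phi x)]) ->
  count (fun x => C x && P x) s = count (fun x => C x && Q x) s.
Proof.
move=> Us Cs Hphi.
have E R : count (fun x => C x && R x) s = count R (filter C s).
  by rewrite count_filter; apply: eq_count => x; rewrite /= andbC.
rewrite !E; set t := filter C s.
have Ct x : x \in t -> C x by rewrite mem_filter => /andP[].
have phi_t : perm_eq (map phi t) t.
  apply: uniq_perm.
  - rewrite map_inj_in_uniq ?filter_uniq // => x y /Ct Cx /Ct Cy Exy.
    by have [_ <- _] := Hphi x Cx; have [_ <- _] := Hphi y Cy; rewrite Exy.
  - exact: filter_uniq.
  - move=> x; apply/mapP/idP => [[y /Ct Cy ->] | tx].
      by have [Cy' _ _] := Hphi y Cy; rewrite mem_filter Cy' Cs.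
    have [Cx' phiK _] := Hphi x (Ct x tx).
    by exists (phi x); rewrite ?mem_filter ?Cx' ?Cs ?phiK.
rewrite -[RHS](permP phi_t) count_map.
by apply: eq_in_count => x /Ct Cx /=; have [_ _ ->] := Hphi x Cx.
Qed.

Lemma mem_words_len L n w :
  size w = L -> all (fun x => 0 < x <= n) w -> w \in words_len L n.
Proof.
elim: L w => [|L IH] [|x w] //= [Hs] /andP[Hx Hw].
apply: (allpairs_f (fun x w => x :: w)); last exact: IH.
by rewrite mem_iota; lia.
Qed.

Lemma size_words_len L n w : w \in words_len L n -> size w = L.
Proof.
elim: L w => [|L IH] w /=; first by rewrite inE => /eqP ->.
by case/allpairsP => -[x w'] [_ Hw ->] /=; rewrite (IH _ Hw).
Qed.

Lemma uniq_words_len L n : uniq (words_len L n).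
Proof.
elim: L => [|L IH] //=.
apply: allpairs_uniq => //; first exact: iota_uniq.
by move=> [x w] [x' w'] _ _ /= [-> ->].
Qed.

(* Words of different lengths are different, so the candidate list is
   duplicate-free. *)
Lemma uniq_cands n : uniq (cands n).
Proof.
rewrite /cands; elim: n.+1 0 => [|k IH] m //=.
rewrite cat_uniq uniq_words_len IH andbT.
apply/hasPn => w /flatten_mapP [L HL Hw]; apply/negP => /size_words_len Hs.
by move: HL; rewrite mem_iota (size_words_len Hw) in Hs *; lia.
Qed.

Lemma size_le_sumn b : is_composition b -> size b <= sumn b.
Proof. by elim: b => [|y b IH] //= /andP[Hy /IH]; lia. Qed.

Lemma mem_cands n b : is_composition b -> sumn b = n -> b \in cands n.
Proof.
move=> Hb Hs; apply/flatten_mapP; exists (size b).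
  by rewrite mem_iota ltnS -Hs size_le_sumn.
apply: mem_words_len => //; rewrite -Hs.
elim: b Hb {Hs} => [|y b IH] //= /andP[Hy /IH Hb].
by rewrite Hy leq_addr; apply: sub_all Hb => x /andP[-> Hx] /=; lia.
Qed.

(* Main theorem: [flip a0] is an involution on the compositions of size n
   exchanging those dominating a0 ++ [:: 2] and those dominating
   a0 ++ [:: 1; 1]. *)
Theorem lemma2p4 (a0 : seq nat) (n : nat) :
  is_composition (rcons a0 2) ->
  num_dominating n (rcons a0 2) = num_dominating n (a0 ++ [:: 1; 1]).
Proof.
move=> _.
have count_greedy a : num_dominating n a =
    count (fun b => (is_composition b && (sumn b == n)) && greedy_dom b a) (cands n).
  by apply: eq_count => b; rewrite dominates_greedy andbA.
rewrite !count_greedy.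
apply: (count_involution (phi := flip a0) (C := fun b => is_composition b && (sumn b == n))).
- exact: uniq_cands.
- by move=> b /andP[Hb /eqP Hs]; apply: mem_cands.
- move=> b /andP[Hb /eqP Hs]; have [Hflip Hsum] := flip_composition a0 Hb.
  by rewrite Hflip Hsum Hs eqxx flip_involutive // flip_dominates.
Qed.
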